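(* Let $H=(W,F)$ be a simple undirected graph with a designated root $r_1\in W$ and a set of terminals $S=\{s_1,\dots,s_k\}\subseteq W\setminus\{r_1\}$ with $k\ge 2$, such that no edge of $H$ joins two terminals. Let $H'$, $H'_1$, $H'_2$, $M_1$, $M_2$ and $g$ be as defined in the context. Then for every $S$-wide spanning tree $T$ of $H$ there exists a set $J\subseteq F'$ that is a basis of both $M_1$ and $M_2$ with $g(J)=T$.
   Context: A spanning tree $T$ of $H$ is $S$-wide if every connected component of $T-r_1$ contains at most one terminal. $H'=(W',F')$ is obtained from $H$ by adding $k-1$ new vertices $r_2,\dots,r_k$ and, for each edge $r_1x\in F$ and each $i\in\{2,\dots,k\}$, a new edge $r_ix$. $H'_1$ is the multigraph obtained from $H'$ by identifying $r_1,\dots,r_k$ into a single vertex (keeping parallel edges), and $H'_2$ is the multigraph obtained from $H'$ by identifying $s_1,\dots,s_k$ into a single vertex (keeping parallel edges and loops); both have edge set $F'$. $M_1$ and $M_2$ are the graphic matroids of $H'_1$ and $H'_2$ on ground set $F'$. Define $f:F'\to F$ by $f(xy)=r_1y$ if $x\in\{r_1,\dots,r_k\}$, $f(xy)=xr_1$ if $y\in\{r_1,\dots,r_k\}$, and $f(xy)=xy$ otherwise; for $J\subseteq F'$, $g(J)=\{f(e):e\in J\}$ (an edge set of $H$). *)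

From mathcomp Require Import all_boot.
Set Implicit Arguments. Unset Strict Implicit. Unset Printing Implicit Defensive.

(* Multigraphs: an edge type E, a vertex type V, and an endpoint map
   ends : E -> V * V (loops allowed: ends e = (x, x)).  A set X : {set E}
   of edges is the edge set of the (multi)graph considered. *)
Section MultiGraph.
Variables (E V : finType) (ends : E -> V * V).

Definition mstep (X : {set E}) : rel V :=
  fun x y => [exists e in X, (ends e == (x, y)) || (ends e == (y, x))].

Definition mconn (X : {set E}) (x y : V) : bool := connect (mstep X) x y.

(* X contains no cycle: no edge of X lies on a cycle of X, i.e. the
   endpoints of each edge e are not connected in X - e (a loop is a cycle). *)
Definition acyclic (X : {set E}) : Prop :=
  forall e, e \in X -> ~~ mconn (X :\ e) (ends e).1 (ends e).2.

Definition graphic_basis (G J : {set E}) : Prop :=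
  J \subset G /\ acyclic J /\ (forall e, e \in G -> e \notin J -> ~ acyclic (e |: J)).
End MultiGraph.

Section Construction.
Variables (V : finType) (adj : rel V) (r1 : V) (k : nat) (s : 'I_k -> V).

Definition mkedge (x y : V) : V * V :=
  if enum_rank x < enum_rank y then (x, y) else (y, x).

(* edge set F of H: each edge xy stored once as (x,y) with rank x < rank y *)
Definition Fset : {set V * V} :=
  [set p | adj p.1 p.2 & enum_rank p.1 < enum_rank p.2].

Definition idends (p : V * V) : V * V := p.

(* vertices of H': W plus r_2..r_k; inr i stands for r_(i+2) *)
Definition V' : finType := (V + 'I_k.-1)%type.
(* edges of H': original edges (inl) and, for i and x with r1x in F,
   the new edge r_(i+2) x (inr (i, x)) *)
Definition E' : finType := ((V * V) + ('I_k.-1 * V))%type.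

Definition Fp : {set E'} :=
  [set e : E' | match e with
                | inl p => p \in Fset
                | inr (i, x) => adj r1 x end].

Definition ends' (e : E') : V' * V' :=
  match e with
  | inl p => (inl p.1, inl p.2)
  | inr (i, x) => (inr i, inl x)
  end.

(* H'_1: identify r_1, ..., r_k (vertex set W) *)
Definition phi1 (v : V') : V := match v with inl x => x | inr _ => r1 end.
Definition ends1 (e : E') : V * V := (phi1 (ends' e).1, phi1 (ends' e).2).

(* H'_2: identify s_1, ..., s_k into one vertex, represented by None *)
Definition phi2 (v : V') : option V' :=
  match v with
  | inl x => if [exists i, s i == x] then None else Some (inl x)
  | inr i => Some (inr i)
  end.
Definition ends2 (e : E') : option V' * option V' :=
  (phi2 (ends' e).1, phi2 (ends' e).2).

Definition basis_M1 (J : {set E'}) : Prop := graphic_basis ends1 Fp J.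
Definition basis_M2 (J : {set E'}) : Prop := graphic_basis ends2 Fp J.

Definition fmap (e : E') : V * V :=
  match e with
  | inl p => p
  | inr (_, x) => mkedge r1 x
  end.
Definition gmap (J : {set E'}) : {set V * V} := fmap @: J.

Definition spanning_tree (T : {set V * V}) : Prop :=
  T \subset Fset /\ acyclic idends T /\ (forall x y, mconn idends T x y).

(* T is S-wide: every component of T - r1 contains at most one terminal *)
Definition S_wide (T : {set V * V}) : Prop :=
  forall i j : 'I_k, i != j ->
    ~~ mconn idends [set e in T | (e.1 != r1) && (e.2 != r1)] (s i) (s j).
End Construction.

From mathcomp Require Import all_boot.
Set Implicit Arguments. Unset Strict Implicit. Unset Printing Implicit Defensive.

(* Root the spanning tree T at r1, so that every vertex x <> r1 has a parent
   p(x) with x p(x) in T.  A child x of r1 whose component of T - r1 contains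
   a terminal s_i with i >= 2 is re-hung on the new root r_i of H', i.e. its
   edge r1 x is replaced by r_i x; S-wideness makes i unique.  The result J is
   a forest of H' with one component per root r_1, ..., r_k, the component of
   r_i containing s_i, and f maps J back onto T.  Identifying r_1, ..., r_k
   (in H'_1) or s_1, ..., s_k (in H'_2) only merges vertices lying in distinct
   components of J, which keeps J acyclic and makes it connect the ends of
   every edge, so J is a basis of both M_1 and M_2. *)

Lemma connect_ind (T : finType) (e : rel T) (P : T -> Prop) x y :
  (forall a b, e a b -> P a -> P b) -> connect e x y -> P x -> P y.
Proof.
move=> eP /connectP [p + ->]; elim: p x => [|z p IHp] x //= /andP [exz ez_p] Px.
exact: IHp ez_p (eP _ _ exz Px).
Qed.

Section MultiGraphConnectivity.
Variables (E V : finType) (ends : E -> V * V).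
Implicit Types (X Y G J : {set E}) (e : E) (a b c v : V).

Definition joins e a b := (ends e == (a, b)) || (ends e == (b, a)).

Lemma joins_sym e : symmetric (joins e).
Proof. by move=> a b; rewrite /joins orbC. Qed.

Lemma joins_ends e : joins e (ends e).1 (ends e).2.
Proof. by rewrite /joins -surjective_pairing eqxx. Qed.

Lemma mstepP X a b : reflect (exists2 e, e \in X & joins e a b) (mstep ends X a b).
Proof. exact: exists_inP. Qed.

Lemma mstep_sym X : symmetric (mstep ends X).
Proof.
by move=> a b; apply/mstepP/mstepP => -[e eX]; rewrite joins_sym; exists e.
Qed.

Lemma mconn_sym X : symmetric (mconn ends X).
Proof. exact/sym_connect_sym/mstep_sym. Qed.

Lemma mconn_trans X a b c : mconn ends X a b -> mconn ends X b c -> mconn ends X a c.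
Proof. exact: connect_trans. Qed.

Lemma mconn_hub X a b c : mconn ends X a c -> mconn ends X b c -> mconn ends X a b.
Proof. by move=> ac; rewrite mconn_sym => /(mconn_trans ac). Qed.

Lemma mconn_joins X e a b : e \in X -> joins e a b -> mconn ends X a b.
Proof. by move=> eX eab; apply/connect1/mstepP; exists e. Qed.

Lemma mconn_subset X Y a b : X \subset Y -> mconn ends X a b -> mconn ends Y a b.
Proof.
move=> sXY; apply: connect_sub a b => a b /mstepP [e eX eab].
exact: mconn_joins (subsetP sXY e eX) eab.
Qed.

Lemma graphic_basis_intro G J : J \subset G -> acyclic ends J ->
  (forall e, e \in G -> mconn ends J (ends e).1 (ends e).2) -> graphic_basis ends G J.
Proof.
move=> sJG acJ spanJ; split=> //; split=> // e eG eJ /(_ e (setU11 e J)).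
by rewrite setU1K // spanJ.
Qed.

Section ParentForest.
Variables (par : V -> V) (h : V -> nat) (ed : V -> E).

Definition parent_forest := ed @: [set v | par v != v].
Definition proot v := iter (h v) par v.

Hypothesis h_par : forall v, par v != v -> h (par v) < h v.
Hypothesis ed_joins : forall v, par v != v -> joins (ed v) v (par v).

Lemma h_iter_le m v : h (iter m par v) <= h v.
Proof.
elim: m => //= m /(leq_trans _); apply.
by case: (eqVneq (par (iter m par v)) (iter m par v)) => [->|/h_par/ltnW].
Qed.

Lemma par_iter_fixed m v : h v <= m -> par (iter m par v) = iter m par v.
Proof.
elim: m v => [|m IHm] v hv.
  by case: (eqVneq (par v) v) hv => // /h_par; case: (h v).
case: (eqVneq (par v) v) => [fixv|movv]; first by rewrite !iter_fix.
by rewrite iterSr IHm // -ltnS (leq_trans (h_par movv)).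
Qed.

Lemma iter_proot m v : h v <= m -> iter m par v = proot v.
Proof.
by move=> hv; rewrite -(subnK hv) iterD iter_fix //; apply: par_iter_fixed.
Qed.

Lemma par_proot v : par (proot v) = proot v.
Proof. exact: par_iter_fixed. Qed.

Lemma proot_fixed v : par v = v -> proot v = v.
Proof. exact: iter_fix. Qed.

Lemma proot_par v : proot (par v) = proot v.
Proof.
case: (eqVneq (par v) v) => [-> //|movv].
rewrite [RHS]/proot; have := h_par movv.
by case: (h v) => // m hm; rewrite iterSr iter_proot.
Qed.

Lemma mconn_proot v : mconn ends parent_forest v (proot v).
Proof.
elim: {v}(h v) {-2}v (leqnn (h v)) => [|m IHm] v hv.
  by rewrite -(iter_proot hv); apply: connect0.
case: (eqVneq (par v) v) => [/proot_fixed -> | movv]; first exact: connect0.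
rewrite -proot_par; apply: mconn_trans (IHm _ _); last first.
  by rewrite -ltnS (leq_trans (h_par movv)).
by apply: mconn_joins (ed_joins movv); apply: imset_f; rewrite inE.
Qed.

Lemma mconn_proot_eq a b : mconn ends parent_forest a b -> proot a = proot b.
Proof.
move=> ab; apply: (@connect_ind _ _ (fun c => proot a = proot c) a b _ ab (erefl _)).
move=> b' c /mstepP [_ /imsetP [w]] /[!inE] movw -> wbc ->.
have := ed_joins movw; rewrite /joins.
by case/orP: wbc => /eqP -> /orP [] /eqP [-> ->]; rewrite ?proot_par.
Qed.

End ParentForest.

Lemma joins_mconnE X e a b :
  joins e a b -> mconn ends X (ends e).1 (ends e).2 = mconn ends X a b.
Proof. by case/orP => /eqP ->; rewrite // mconn_sym. Qed.

Lemma parent_forest_acyclic par h ed :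
  (forall v, par v != v -> h (par v) < h v) ->
  (forall v, par v != v -> joins (ed v) v (par v)) ->
  acyclic ends (parent_forest par ed).
Proof.
move=> h_par ed_joins _ /imsetP [c] /[!inE] movc ->.
(* Without [ed c] the forest is part of the one where [c] is made a root; there
   [c] and [par c] get different roots because heights decrease along parents. *)
pose parc v := if v == c then v else par v.
have parc_lt v : parc v != v -> h (parc v) < h v.
  by rewrite /parc; case: ifP => [_ /eqP // | _ /h_par].
have edc_joins v : parc v != v -> joins (ed v) v (parc v).
  by rewrite /parc; case: ifP => [_ /eqP // | _ /ed_joins].
have sub_forest : parent_forest par ed :\ ed c \subset parent_forest parc ed.
  apply/subsetP => e' /setD1P [edc /imsetP [w /[!inE] movw e'_eq]]; subst e'.
  apply: imset_f; rewrite inE /parc /=.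
  by case: (eqVneq w c) edc => [-> | _ _]; rewrite ?eqxx.
have root_c : proot parc h c = c by apply: proot_fixed; rewrite /parc eqxx.
have h_root : h (proot parc h (par c)) < h c.
  exact: leq_ltn_trans (h_iter_le parc_lt _ (par c)) (h_par _ movc).
rewrite (joins_mconnE _ (ed_joins _ movc)); apply/negP.
move/(mconn_subset sub_forest)/(mconn_proot_eq parc_lt edc_joins).
by rewrite root_c => c_root; rewrite -c_root ltnn in h_root.
Qed.

End MultiGraphConnectivity.

Section MergeVertices.
Variables (E V W : finType) (ends : E -> V * V) (phi : V -> W).
Implicit Types (X : {set E}) (e : E) (a b c : V).

Definition merge_ends e := (phi (ends e).1, phi (ends e).2).

Lemma joins_merge_ends e z1 z2 : joins merge_ends e z1 z2 ->
  exists a b, [/\ joins ends e a b, phi a = z1 & phi b = z2].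
Proof.
move=> /orP [] /eqP [<- <-]; [exists (ends e).1, (ends e).2 | exists (ends e).2, (ends e).1];
  by rewrite ?joins_ends // joins_sym joins_ends.
Qed.

Lemma mconn_merge X a b : mconn ends X a b -> mconn merge_ends X (phi a) (phi b).
Proof.
move=> ab; apply: (@connect_ind _ _ (fun c => mconn merge_ends X (phi a) (phi c)) a b _ ab).
  move=> c d /mstepP [e eX ecd] /connect_trans; apply; apply: mconn_joins eX _.
  by rewrite /joins /merge_ends; case/orP: ecd => /eqP ->; rewrite eqxx ?orbT.
exact: connect0.
Qed.

Variable S : {set V}.
Hypothesis phi_inj_off_S : forall a b, phi a = phi b -> a != b -> (a \in S) && (b \in S).

Lemma mconn_merge_lift X a b : mconn merge_ends X (phi a) (phi b) ->
  mconn ends X a b \/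
  exists s1 s2, [/\ s1 \in S, s2 \in S, mconn ends X a s1 & mconn ends X s2 b].
Proof.
pose through_S c := exists s1 s2, [/\ s1 \in S, s2 \in S, mconn ends X a s1 & mconn ends X s2 c].
move=> ab; have [c phic [ac | acS]] : exists2 c, phi c = phi b & mconn ends X a c \/ through_S c.
- apply: (@connect_ind _ _ (fun z => exists2 c, phi c = z & mconn ends X a c \/ through_S c)
    _ _ _ ab); last by exists a => //; left; apply: connect0.
  move=> _ _ /mstepP [e eX /joins_merge_ends [a' [c' [ea'c' <- <-]]]] /= [c phic ac].
  have a'c' := mconn_joins eX ea'c'; exists c' => //.
  case: (eqVneq c a') => [ca' | ca']; last first.
    case/andP: (phi_inj_off_S phic ca') => cS a'S; right.
    case: ac => [ac | [s1 [s2 [s1S _ as1 _]]]]; first by exists c, a'.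
    by exists s1, a'.
  subst a'; case: ac => [ac | [s1 [s2 [s1S s2S as1 s2c]]]]; first by left; apply: mconn_trans a'c'.
  by right; exists s1, s2; split=> //; apply: mconn_trans a'c'.
- case: (eqVneq c b) => [<- | cb]; [by left | right].
  by case/andP: (phi_inj_off_S phic cb) => cS bS; exists c, b; split=> //; apply: connect0.
- case: (eqVneq c b) => [<- | cb]; [by right | right].
  case/andP: (phi_inj_off_S phic cb) => _ bS; case: acS => [s1 [s2 [s1S _ as1 _]]].
  by exists s1, b; split=> //; apply: connect0.
Qed.

Lemma merge_acyclic X : acyclic ends X ->
  {in S &, forall a b, mconn ends X a b -> a = b} -> acyclic merge_ends X.
Proof.
move=> acX sepS e eX; have /negP nuv := acX e eX; apply/negP.
have uv := mconn_joins eX (joins_ends ends e).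
have sub := subD1set X e.
case/mconn_merge_lift => [// | [s1 [s2 [s1S s2S us1 s2v]]]].
have s12 : s1 = s2.
  apply: sepS => //; rewrite mconn_sym in us1; rewrite mconn_sym in s2v.
  exact: mconn_trans (mconn_subset sub us1) (mconn_trans uv (mconn_subset sub s2v)).
by apply: nuv; rewrite s12 in us1; apply: mconn_trans us1 s2v.
Qed.

End MergeVertices.

Section ParentTowardRoot.
Variables (V : finType) (e : rel V) (r : V).
Hypothesis reach_r : forall x, connect e x r.

Definition reaches_in x m := [exists p : m.-tuple V, path e x p && (last x p == r)].

Lemma reaches_in_exists x : exists m, reaches_in x m.
Proof.
have /connectP [p ep r_last] := reach_r x.
by exists (size p); apply/existsP; exists (in_tuple p); rewrite ep -r_last eqxx.
Qed.

Definition dist x := ex_minn (reaches_in_exists x).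
Definition parent x := odflt x [pick y | e x y && (dist y < dist x)].

Lemma dist_min x m : reaches_in x m -> dist x <= m.
Proof. by rewrite /dist; case: ex_minnP => d _ /[apply]. Qed.

Lemma reaches_in_dist x : reaches_in x (dist x).
Proof. by rewrite /dist; case: ex_minnP. Qed.

Lemma dist_eq0 x : (dist x == 0) = (x == r).
Proof.
apply/eqP/eqP => [d0 | ->].
  by move: (reaches_in_dist x); rewrite d0 => /existsP [p]; rewrite tuple0 => /andP [_ /eqP].
by apply/eqP; rewrite -leqn0 dist_min //; apply/existsP; exists [tuple]; rewrite /= eqxx.
Qed.

Lemma parentP x : x != r -> e x (parent x) && (dist (parent x) < dist x).
Proof.
rewrite -dist_eq0 /parent; case: pickP => [y -> // | no_step] dx0.
have [m dx] : exists m, dist x = m.+1 by case: (dist x) dx0 => // m; exists m.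
move: (reaches_in_dist x); rewrite dx => /existsP [[[|y p] //= size_p]].
case/andP=> /andP [exy y_p] last_p; have := no_step y; rewrite exy dx ltnS dist_min //.
by apply/existsP; exists (Tuple size_p); rewrite /= y_p.
Qed.

Lemma parent_root : parent r = r.
Proof.
rewrite /parent; case: pickP => [y /andP [_] | //].
by move/eqP: (dist_eq0 r); rewrite eqxx => ->.
Qed.

Lemma parent_fixed x : (parent x == x) = (x == r).
Proof.
case: (eqVneq x r) => [-> | xr]; first by rewrite parent_root eqxx.
have /andP [_] := parentP xr; by apply: contraTF => /eqP ->; rewrite ltnn.
Qed.

Lemma dist_parent x : parent x != x -> dist (parent x) < dist x.
Proof. by rewrite parent_fixed => /parentP /andP []. Qed.

End ParentTowardRoot.

Section OrientedEdges.
Variable V : finType.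
Implicit Types (x y : V) (q : V * V).

Lemma mkedge_joins x y : joins (@idends V) (mkedge x y) x y.
Proof. by rewrite /joins /idends /mkedge; case: ifP; rewrite eqxx ?orbT. Qed.

Lemma mkedge_sym x y : mkedge x y = mkedge y x.
Proof.
by rewrite /mkedge; case: ltngtP => // /val_inj /enum_rank_inj ->.
Qed.

Lemma Fset_mkedge (adj : rel V) q x y :
  q \in Fset adj -> joins (@idends V) q x y -> q = mkedge x y.
Proof.
rewrite inE /mkedge /joins /idends => /andP [_ lt_q] /orP [] /eqP q_eq; subst q.
  by rewrite lt_q.
by rewrite ltnNge (ltnW lt_q).
Qed.

Lemma mkedge_Fset_adj (adj : rel V) x y :
  symmetric adj -> mkedge x y \in Fset adj -> adj x y.
Proof.
by move=> adj_sym; rewrite inE /mkedge; case: ifP => _ /andP [] //; rewrite adj_sym.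
Qed.

End OrientedEdges.

Section Construction.
Variables (V : finType) (adj : rel V) (r1 : V) (T : {set V * V}).
Hypothesis T_tree : spanning_tree adj T.

Let T_conn x : connect (mstep (@idends V) T) x r1 := T_tree.2.2 x r1.
Local Notation par := (parent T_conn).
Local Notation depth := (dist T_conn).

Lemma par_edge x : x != r1 -> mkedge x (par x) \in T.
Proof.
move/(parentP T_conn)/andP => -[/mstepP [q qT q_joins] _].
by rewrite -(Fset_mkedge (subsetP T_tree.1 q qT) q_joins).
Qed.

Lemma T_parent_forest : T = parent_forest par (fun x => mkedge x (par x)).
Proof.
set F := parent_forest _ _.
have par_lt := @dist_parent _ _ _ T_conn.
have mk_joins x (_ : par x != x) := mkedge_joins x (par x).
have F_conn x : mconn (@idends V) F x r1.
  have /eqP := par_proot par_lt x; rewrite parent_fixed => /eqP <-.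
  exact: mconn_proot par_lt mk_joins x.
have F_sub_T : F \subset T.
  by apply/subsetP => _ /imsetP [x /[!inE] /[!parent_fixed] xr1 ->]; apply: par_edge.
apply/eqP; rewrite eqEsubset F_sub_T andbT; apply/subsetP => q qT; apply: contraT => qF.
have /negP := T_tree.2.1 q qT; case.
have sub : F \subset T :\ q by rewrite subsetD1 F_sub_T qF.
by apply: mconn_subset sub _; apply: mconn_hub (F_conn _) (F_conn _).
Qed.

Variables (n : nat) (s : 'I_n.+1 -> V).
Hypotheses (adj_sym : symmetric adj) (s_neq_r1 : forall i, s i != r1).
Hypothesis T_wide : S_wide r1 s T.

(* Terminals are indexed from 0: [s i] is s_(i+1), whose root r_(i+1) is [inl r1]
   for i = 0 and [inr j], i.e. r_(j+2), for i = j+1. *)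
Definition root_of (i : 'I_n.+1) : V' V n.+1 :=
  if unlift ord0 i is Some j then inr j else inl r1.

Definition T_cut := [set q in T | (q.1 != r1) && (q.2 != r1)].

Definition branch x := [pick i | mconn (@idends V) T_cut (s i) x].

(* J is encoded by its parent function on the vertices of H', with roots as
   fixed points; [branch x] is the terminal in the component of x in T - r1. *)
Definition hpar (v : V' V n.+1) : V' V n.+1 :=
  match v with
  | inl x => if (x != r1) && (par x == r1) then oapp root_of (inl r1) (branch x)
             else inl (par x)
  | inr j => inr j
  end.

Definition hdepth (v : V' V n.+1) := if v is inl x then depth x else 0.

(* The value at the roots [inr _] is never used. *)
Definition hedge (v : V' V n.+1) : E' V n.+1 :=
  if v is inl x then
    if hpar v is inr j then inr (j, x) else inl (mkedge x (par x))
  else inl (r1, r1).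

Definition Jforest := parent_forest hpar hedge.

Lemma root_of_inj : injective root_of.
Proof.
apply: (can_inj (g := fun v => if v is inr j then lift ord0 j else ord0)) => i.
by rewrite /root_of; case: (unliftP ord0 i) => [j|] ->.
Qed.

Lemma hpar_root_of i : hpar (root_of i) = root_of i.
Proof. by rewrite /root_of; case: (unlift ord0 i) => //=; rewrite eqxx parent_root. Qed.

Lemma hpar_inl x : x != r1 ->
  hpar (inl x) = inl (par x) \/ exists2 i, par x = r1 & hpar (inl x) = root_of i.
Proof.
move=> xr1 /=; rewrite xr1 /=; case: (eqVneq (par x) r1) => [par_x | _]; last by left.
case: (branch x) => [i|] /=; last by left; rewrite par_x.
by right; exists i.
Qed.

Lemma hpar_moved v : (hpar v != v) = if v is inl x then x != r1 else false.
Proof.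
case: v => [x | j]; last by rewrite /= eqxx.
case: (eqVneq x r1) => [-> | xr1]; first by rewrite /= eqxx /= parent_root eqxx.
case: (hpar_inl xr1) => [-> | [i _ ->]].
  by apply/eqP => -[/eqP]; rewrite parent_fixed (negbTE xr1).
rewrite /root_of; case: (unlift ord0 i) => //.
by apply/eqP => -[/eqP]; rewrite eq_sym (negbTE xr1).
Qed.

Lemma hpar_fixed v : hpar v = v -> exists i, v = root_of i.
Proof.
case: v => [x | j] fix_v; last by exists (lift ord0 j); rewrite /root_of liftK.
have : ~~ (hpar (inl x) != inl x) by rewrite fix_v eqxx.
by rewrite hpar_moved negbK => /eqP ->; exists ord0; rewrite /root_of unlift_none.
Qed.

Lemma hdepth_root_of i : hdepth (root_of i) = 0.
Proof. by rewrite /root_of; case: (unlift ord0 i) => //=; apply/eqP; rewrite dist_eq0. Qed.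

Lemma hpar_lt v : hpar v != v -> hdepth (hpar v) < hdepth v.
Proof.
case: v => [x | j]; rewrite hpar_moved // => xr1.
have depth_x : 0 < depth x by rewrite lt0n dist_eq0.
case: (hpar_inl xr1) => [-> | [i _ ->]]; last by rewrite hdepth_root_of.
by apply: dist_parent; rewrite parent_fixed.
Qed.

Lemma hedge_inl x :
  hedge (inl x) = if hpar (inl x) is inr j then inr (j, x) else inl (mkedge x (par x)).
Proof. by []. Qed.

Lemma joins_inl (q : V * V) x y :
  joins (@ends' V n.+1) (inl q) (inl x) (inl y) = joins (@idends V) q x y.
Proof. by case: q => a b; rewrite /joins /= !xpair_eqE. Qed.

Lemma hedge_joins v : hpar v != v -> joins (@ends' V n.+1) (hedge v) v (hpar v).
Proof.
case: v => [x | j]; rewrite hpar_moved // => xr1.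
rewrite hedge_inl; case: (hpar_inl xr1) => [-> | [i par_x ->]].
  by rewrite joins_inl mkedge_joins.
rewrite /root_of; case: (unlift ord0 i) => [j|] /=; first by rewrite /joins eqxx orbT.
by rewrite joins_inl; have := mkedge_joins x (par x); rewrite par_x.
Qed.

Lemma fmap_hedge x : x != r1 -> fmap r1 (hedge (inl x)) = mkedge x (par x).
Proof.
move=> xr1; rewrite hedge_inl; case: (hpar_inl xr1) => [-> // | [i par_x ->]].
by rewrite /root_of; case: (unlift ord0 i) => //= j; rewrite par_x mkedge_sym.
Qed.

Lemma hedge_Fp x : x != r1 -> hedge (inl x) \in Fp adj r1 n.+1.
Proof.
move=> xr1; have par_T := subsetP T_tree.1 _ (par_edge xr1).
rewrite hedge_inl inE; case: (hpar_inl xr1) => [-> // | [i par_x ->]].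
rewrite /root_of; case: (unlift ord0 i) => // j; rewrite par_x in par_T.
by rewrite adj_sym (mkedge_Fset_adj adj_sym par_T).
Qed.

Lemma Jforest_sub_Fp : Jforest \subset Fp adj r1 n.+1.
Proof.
apply/subsetP => e /imsetP [v]; rewrite inE hpar_moved.
by case: v => // x xr1 ->; apply: hedge_Fp.
Qed.

Lemma gmap_Jforest : gmap r1 Jforest = T.
Proof.
apply/setP => q; rewrite [in RHS]T_parent_forest /gmap /Jforest /parent_forest -imset_comp.
apply/imsetP/imsetP => -[v].
  by rewrite inE hpar_moved; case: v => // x xr1 ->; exists x; rewrite ?inE ?parent_fixed //= fmap_hedge.
by rewrite inE parent_fixed => xr1 ->; exists (inl v); rewrite ?inE ?hpar_moved //= fmap_hedge.
Qed.

Local Notation hroot := (proot hpar hdepth).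

Lemma mconn_hroot v : mconn (@ends' V n.+1) Jforest v (hroot v).
Proof. exact: mconn_proot hpar_lt hedge_joins v. Qed.

Lemma mconn_hroot_eq a b : mconn (@ends' V n.+1) Jforest a b -> hroot a = hroot b.
Proof. exact: (mconn_proot_eq hpar_lt hedge_joins). Qed.

Lemma hroot_root_of v : exists i, hroot v = root_of i.
Proof. exact/hpar_fixed/(par_proot hpar_lt). Qed.

Lemma branch_terminal x i : mconn (@idends V) T_cut (s i) x -> branch x = Some i.
Proof.
move=> cut_ix; rewrite /branch; case: pickP => [i' cut_i'x | /(_ i)]; last by rewrite cut_ix.
by congr Some; apply/eqP; apply: contraTT (mconn_hub cut_i'x cut_ix) => /T_wide.
Qed.

Lemma hroot_cut x i : x != r1 -> mconn (@idends V) T_cut (s i) x -> hroot (inl x) = root_of i.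
Proof.
elim: {x}(depth x) {-2}x (leqnn (depth x)) => [|m IHm] x dx xr1 cut_ix.
  by move: dx; rewrite leqn0 dist_eq0 (negbTE xr1).
rewrite -(proot_par hpar_lt); case: (eqVneq (par x) r1) => par_x.
  by rewrite /= xr1 par_x eqxx (branch_terminal cut_ix) /= (proot_fixed _ (hpar_root_of i)).
have -> : hpar (inl x) = inl (par x) by rewrite /= xr1 (negbTE par_x).
apply: (IHm (par x) _ par_x); first by rewrite -ltnS (leq_trans (dist_parent _)) // parent_fixed.
apply: mconn_trans cut_ix (mconn_joins _ (mkedge_joins x (par x))).
by rewrite inE par_edge //= /mkedge; case: ifP => _ /=; rewrite xr1 par_x.
Qed.

Lemma hroot_terminal i : hroot (inl (s i)) = root_of i.
Proof. exact: hroot_cut (s_neq_r1 i) (connect0 _ _). Qed.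

Lemma Jforest_acyclic : acyclic (@ends' V n.+1) Jforest.
Proof. exact: parent_forest_acyclic hpar_lt hedge_joins. Qed.

Lemma phi1_root_of i : phi1 r1 (root_of i) = r1.
Proof. by rewrite /root_of; case: (unlift ord0 i). Qed.

Lemma phi1_merges_roots a b : phi1 r1 a = phi1 r1 b -> a != b ->
  (a \in [set v | hpar v == v]) && (b \in [set v | hpar v == v]).
Proof.
have root_r1 v : phi1 r1 v = r1 -> hpar v == v.
  by case: v => [x /= -> | j] /=; rewrite ?eqxx //= parent_root eqxx.
move=> ab ne; have a_r1 : phi1 r1 a = r1.
  by case: a b ab ne => [x|j] [y|j'] //= ->; rewrite ?eqxx.
by rewrite !inE !root_r1 // -ab.
Qed.

Lemma basis_M1_Jforest : basis_M1 adj r1 Jforest.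
Proof.
apply: graphic_basis_intro Jforest_sub_Fp _ _.
  apply: (merge_acyclic phi1_merges_roots) Jforest_acyclic _.
  by move=> a b /[!inE] /eqP fix_a /eqP fix_b /mconn_hroot_eq; rewrite !proot_fixed.
have hub (v : V' V n.+1) : mconn (@ends1 V r1 n.+1) Jforest (phi1 r1 v) r1.
  have [i root_v] := hroot_root_of v.
  by have := mconn_merge (@phi1 V r1 n.+1) (mconn_hroot v); rewrite root_v phi1_root_of.
by move=> e _; apply: mconn_hub (hub _) (hub _).
Qed.

Lemma phi2_some a w : phi2 s a = Some w -> w = a.
Proof. by case: a => [x|j] /=; [case: ifP => // _ [] | case]. Qed.

Lemma phi2_none a : phi2 s a = None -> exists i, a = inl (s i).
Proof. by case: a => [x|j] //=; case: ifP => // /existsP [i /eqP <-]; exists i. Qed.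

Lemma phi2_terminal i : phi2 s (inl (s i)) = None.
Proof. by rewrite /= (_ : [exists j, s j == s i]) //; apply/existsP; exists i. Qed.

Lemma phi2_merges_terminals a b : phi2 s a = phi2 s b -> a != b ->
  (a \in [set v | phi2 s v == None]) && (b \in [set v | phi2 s v == None]).
Proof.
move=> ab ne; rewrite !inE -ab andbb; case ea : (phi2 s a) ab => [w|] // eb.
by move: ne; rewrite -(phi2_some ea) -(phi2_some (esym eb)) eqxx.
Qed.

Lemma basis_M2_Jforest : basis_M2 adj r1 s Jforest.
Proof.
apply: graphic_basis_intro Jforest_sub_Fp _ _.
  apply: (merge_acyclic phi2_merges_terminals) Jforest_acyclic _.
  move=> a b /[!inE] /eqP /phi2_none [i ->] /eqP /phi2_none [i' ->] /mconn_hroot_eq.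
  by rewrite !hroot_terminal => /root_of_inj ->.
have hub (v : V' V n.+1) : mconn (ends2 s) Jforest (phi2 s v) None.
  have [i root_v] := hroot_root_of v.
  have v_si : mconn (@ends' V n.+1) Jforest v (inl (s i)).
    by apply: mconn_hub (mconn_hroot v) _; rewrite root_v -(hroot_terminal i); apply: mconn_hroot.
  by have := mconn_merge (phi2 s) v_si; rewrite phi2_terminal.
by move=> e _; apply: mconn_hub (hub _) (hub _).
Qed.

End Construction.

Theorem lemma8 (V : finType) (adj : rel V) (r1 : V) (k : nat) (s : 'I_k -> V) :
  symmetric adj -> irreflexive adj ->
  2 <= k -> injective s -> (forall i, s i != r1) ->
  (forall i j, ~~ adj (s i) (s j)) ->
  forall T : {set V * V}, spanning_tree adj T -> S_wide r1 s T ->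
  exists J : {set E' V k},
    basis_M1 adj r1 J /\ basis_M2 adj r1 s J /\ gmap r1 J = T.
Proof.
move=> adj_sym _ k_ge2 _ s_neq_r1 _ T T_tree T_wide.
case: k s k_ge2 s_neq_r1 T_wide => [// | n] s _ s_neq_r1 T_wide.
exists (Jforest r1 T_tree s); split; first exact: basis_M1_Jforest.
by split; [apply: basis_M2_Jforest | apply: gmap_Jforest].
Qed.
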